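(* Let $n\ge2$, $N\ge n$ and let $(\mathcal T_0,\mathfrak c)$ be an $(N{+}1)$-colored initial triangulation in $\mathbb R^n$. Then successive bisections of simplices in $\mathcal T_0$ according to the generation-based bisection rule produce the same simplices as successive applications of Maubach's bisection to the simplices of $\mathcal T_0$ tagged by the Maubach initialization.
   Context: An $(N{+}1)$-colored triangulation is a conforming triangulation $\mathcal T_0$ of a polyhedral domain in $\mathbb R^n$ (finite set of $n$-simplices with disjoint interiors, any two meeting in the empty set or a common subsimplex) with a map $\mathfrak c$ from its vertices to $\{0,\dots,N\}$, $N\ge n$, such that vertices of each simplex have distinct colors. Generation-based rule: each vertex $v$ has an integer generation $g(v)$, level $\ell(v)$ and type $t(v)\in\{1,\dots,N\}$ with $g(v)=N(\ell(v)-1)+t(v)$; initial vertices have $g(v)=-\mathfrak c(v)$. For an arising $n$-simplex $T=[v_0,\dots,v_n]$ sorted so that $g(v_0)>\dots>g(v_n)$: if $\ell(v_n)\ne\ell(v_{n-1})$, the bisection edge is $[v_{n-1},v_n]$ and the midpoint gets generation $g(v_{n-1})+N$; otherwise with $j=\min\{k:\ell(v_k)=\ell(v_n)\}$ the bisection edge is $[v_j,v_n]$ and the midpoint gets generation $g(v_n)+2N+1-t(v_j)$. The children replace one endpoint of the bisection edge by its midpoint. Maubach's bisection: a tagged simplex $[v_0,\dots,v_n]_\gamma$, $\gamma\in\{1,\dots,n\}$, is bisected at $v'=(v_0+v_\gamma)/2$ into $[v_0,\dots,v_{\gamma-1},v',v_{\gamma+1},\dots,v_n]_{\gamma'}$ and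 $[v_1,\dots,v_\gamma,v',v_{\gamma+1},\dots,v_n]_{\gamma'}$, with $\gamma'=\gamma-1$ if $\gamma\ge2$ and $\gamma'=n$ if $\gamma=1$. Maubach initialization: order the vertices of $T\in\mathcal T_0$ as $v_0,\dots,v_n$ with $\mathfrak c(v_0)<\dots<\mathfrak c(v_n)$ and tag $T=[v_n,v_0,\dots,v_{n-1}]_n$ if $\mathfrak c(v_n)=N$, and $T=[v_0,\dots,v_n]_n$ otherwise. *)

From HB Require Import structures.
From mathcomp Require Import all_boot all_order all_algebra.
From mathcomp Require Import all_classical all_reals.
From mathcomp Require Import topology normedtype matrix_topology matrix_normedtype.
Set Implicit Arguments. Unset Strict Implicit. Unset Printing Implicit Defensive.
Import Order.TTheory GRing.Theory Num.Theory.
Import numFieldTopology.Exports numFieldNormedType.Exports.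
Local Open Scope classical_set_scope.
Local Open Scope ring_scope.

Section Defs.
Variables (R : realType) (n : nat).
Notation point := 'rV[R]_n.

Definition hull (s : seq point) : set point :=
  [set x | exists lam : 'I_(size s) -> R,
     (forall i, 0 <= lam i) /\ \sum_i lam i = 1 /\
     x = \sum_i lam i *: nth 0 s i].

Definition is_nsimplex (s : seq point) : Prop :=
  size s = n.+1 /\
  row_free (\matrix_(i < n) (nth 0 s i.+1 - nth 0 s 0)).

Definition colored_triangulation (N : nat) (T0 : seq (seq point))
    (c : point -> nat) : Prop :=
  (forall T, T \in T0 -> is_nsimplex T) /\
      (forall i j, (i < size T0)%N -> (j < size T0)%N -> i != j ->
         interior (hull (nth [::] T0 i)) `&` interior (hull (nth [::] T0 j))
           = set0) /\
      (* conformity: two simplices meet in the empty set or a common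
         subsimplex (the hull of a set of common vertices; the empty set of
         vertices gives the empty intersection) *)
      (forall i j, (i < size T0)%N -> (j < size T0)%N -> i != j ->
         exists S : seq point,
           {subset S <= nth [::] T0 i} /\ {subset S <= nth [::] T0 j} /\
           hull (nth [::] T0 i) `&` hull (nth [::] T0 j) = hull S) /\
      (* the covered region is a domain: its interior is connected *)
      connected (interior (\bigcup_(T in [set T | T \in T0]) hull T)) /\
      (forall T, T \in T0 -> forall v, v \in T -> (c v <= N)%N) /\
      (forall T, T \in T0 -> uniq (map c T)).

Definition midpoint (a b : point) : point := (2%:R)^-1 *: (a + b).

(* g = N (l - 1) + t with t in {1..N} *)
Definition level (N : nat) (g : int) : int := ((g - 1) %/ N)%Z + 1.
Definition vtype (N : nat) (g : int) : int := ((g - 1) %% N)%Z + 1.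

(* a simplex whose vertices carry generations *)
Definition gsimplex := seq (point * int).

Definition gen_bisect (N : nat) (s : gsimplex) : gsimplex * gsimplex :=
  (* sort so that g(v_0) > ... > g(v_n) *)
  let t := sort (fun a b : point * int => b.2 <= a.2) s in
  let m := (size t).-1 in
  let d := (0 : point, 0 : int) in
  let vn := nth d t m in
  let vn1 := nth d t m.-1 in
  let j := if level N vn1.2 != level N vn.2 then m.-1
           else find (fun v : point * int => level N v.2 == level N vn.2) t in
  let vj := nth d t j in
  let g' := if level N vn1.2 != level N vn.2 then vn1.2 + N%:Z
            else vn.2 + 2 * N%:Z + 1 - vtype N vj.2 in
  let v' := (midpoint vj.1 vn.1, g') in
  (set_nth d t j v', set_nth d t m v').

Definition gen_children (N : nat) (s : gsimplex) : seq gsimplex :=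
  let p := gen_bisect N s in [:: p.1; p.2].

Definition gen_desc (N k : nat) (s : gsimplex) : seq gsimplex :=
  iter k (fun L => flatten (map (gen_children N) L)) [:: s].

Definition gen_init (c : point -> nat) (T : seq point) : gsimplex :=
  map (fun v => (v, - (c v)%:Z)) T.

Definition tsimplex := (seq point * nat)%type.

Definition maub_children (s : tsimplex) : seq tsimplex :=
  let: (v, gam) := s in
  let v' := midpoint (nth 0 v 0) (nth 0 v gam) in
  let gam' := if (2 <= gam)%N then gam.-1 else n in
  [:: (set_nth 0 v gam v', gam');
      (take gam (behead v) ++ v' :: drop gam.+1 v, gam')].

Definition maub_desc (k : nat) (s : tsimplex) : seq tsimplex :=
  iter k (fun L => flatten (map maub_children L)) [:: s].

Definition maub_init (N : nat) (c : point -> nat) (T : seq point) : tsimplex :=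
  let u := sort (fun a b => (c a <= c b)%N) T in
  if c (last 0 u) == N then (rotr 1 u, n) else (u, n).

Definition same_simplices (A B : seq (seq point)) : bool :=
  all (fun a => has (perm_eq a) B) A && all (fun b => has (perm_eq b) A) B.

End Defs.

From HB Require Import structures.
From mathcomp Require Import all_boot all_order all_algebra.
From mathcomp Require Import all_classical all_reals.
From mathcomp Require Import topology normedtype matrix_topology matrix_normedtype.
From mathcomp Require Import zify.
Import Order.TTheory GRing.Theory Num.Theory.
Import numFieldTopology.Exports numFieldNormedType.Exports.
Local Open Scope ring_scope.

(* Both rules see a simplex of the refinement through the same data.  List its
   vertices as [x0, X1, xg, X2], where X1 ++ [xg] are the vertices of some level l
   and X2 those of level l + 1, each block newest first, and x0 is either of lower
   level or the newest vertex of level l.  Read as the Maubach simplex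
   [x0, X1, xg, X2] with tag |X1| + 1, both rules bisect the edge [x0, xg]: if x0
   has lower level it is v_n and xg is v_(n-1) of the generation rule, otherwise
   x0 is the first vertex v_j of level l and xg = v_n.  The midpoint lands in
   level l + 1, newer than X2, so both children have the same shape again with
   Maubach's tags; the Maubach initialization has this shape with l = 0, and
   induction on the number of bisection rounds gives the theorem. *)

Set Implicit Arguments.
Unset Strict Implicit.
Unset Printing Implicit Defensive.

Section Levels.
Variable N : nat.

Definition at_level (l g : int) : bool := (N%:Z * (l - 1) < g) && (g <= N%:Z * l).

Lemma at_level_level g : (0 < N)%N -> at_level (level N g) g.
Proof.
move=> N_gt0; rewrite /at_level /level addrK.
have Nz : N%:Z != 0 by rewrite eqz_nat -lt0n.
have := divz_eq (g - 1) N; have := modz_ge0 (g - 1) Nz.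
have : ((g - 1) %% N)%Z < N%:Z by rewrite ltz_pmod // ltz_nat.
lia.
Qed.

Lemma levelE l g : (0 < N)%N -> at_level l g -> level N g = l.
Proof. by move=> /(at_level_level g); rewrite /at_level; nia. Qed.

Lemma vtypeE l g : (0 < N)%N -> at_level l g -> vtype N g = g - N%:Z * (l - 1).
Proof.
move=> N_gt0 /(levelE N_gt0); rewrite /level /vtype => <-.
by have := divz_eq (g - 1) N; rewrite addrK; lia.
Qed.

(* The midpoint of [x0, xg] gets generation g(xg) + bisect_shift l g(x0) under
   either branch of the generation rule. *)
Definition bisect_shift (l g0 : int) : int :=
  if g0 <= N%:Z * (l - 1) then N%:Z else 2 * N%:Z + 1 - (g0 - N%:Z * (l - 1)).

Definition below_or_newer (l g0 g : int) : bool :=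
  (g0 <= N%:Z * (l - 1)) || at_level l g0 && (g < g0).

Lemma at_level_add_shift l g0 g : at_level l g -> below_or_newer l g0 g ->
  at_level (l + 1) (g + bisect_shift l g0).
Proof.
rewrite /at_level /below_or_newer /bisect_shift => /andP[g_gt g_le].
by case: ifP => [_ _ | _ /= /andP[/andP[g0_gt g0_le] g_lt]]; apply/andP; split; lia.
Qed.

Lemma bisect_shift_lt l g0 g : at_level l g -> below_or_newer l g0 g ->
  bisect_shift l g0 < bisect_shift l g.
Proof.
rewrite /at_level /below_or_newer /bisect_shift => /andP[g_gt g_le].
have -> : (g <= N%:Z * (l - 1)) = false by apply/negbTE; rewrite -ltNge.
by case: ifP => [_ _ | _ /= /andP[/andP[g0_gt g0_le] g_lt]]; lia.
Qed.

Lemma below_or_newer_le l g0 g : below_or_newer l g0 g -> g0 <= N%:Z * l.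
Proof. by rewrite /below_or_newer /at_level => /orP[| /andP[/andP[_ ?] _]]; lia. Qed.

Lemma pairwise_gt_cat_level l (A B : seq int) :
  all (at_level (l + 1)) A -> all (fun g => g <= N%:Z * l) B ->
  pairwise >%R A -> pairwise >%R B -> pairwise >%R (A ++ B).
Proof.
move=> /allP A_lev /allP B_le A_gt B_gt; rewrite pairwise_cat A_gt B_gt !andbT.
apply/allrelP => a b /A_lev + /B_le; rewrite /at_level addrK /=; lia.
Qed.

End Levels.

Section SeqFacts.
Variable T : Type.
Implicit Types (d x y : T) (A B : seq T).

Lemma nth_cat_size d A x B : nth d (A ++ x :: B) (size A) = x.
Proof. by rewrite nth_cat ltnn subnn. Qed.

Lemma set_nth_cat_size d A x B y : set_nth d (A ++ x :: B) (size A) y = A ++ y :: B.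
Proof. by elim: A => //= a A ->. Qed.

End SeqFacts.

Lemma pairwise_gt_cons2 d (T : porderType d) (a b : T) s :
  (a < b)%O -> pairwise >%O (a :: s) -> pairwise >%O (b :: a :: s).
Proof.
move=> ab /[dup] a_s /andP[/allP a_gt _]; rewrite pairwise_cons a_s andbT /= ab /=.
by apply/allP => x /a_gt /lt_trans; apply.
Qed.

Lemma pairwise_mem_neq (T : eqType) (r : rel T) t a b :
  pairwise r t -> a \in t -> b \in t -> a != b -> r a b || r b a.
Proof.
elim: t => //= x t IH /andP[/allP r_x r_t].
rewrite !inE => /predU1P[-> | a_t] /predU1P[-> | b_t]; rewrite ?eqxx //.
- by rewrite r_x.
- by rewrite r_x ?orbT.
- exact: IH.
Qed.

Lemma sort_key_perm_eq (T : eqType) d (O : orderType d) (key : T -> O) s t :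
  perm_eq s t -> pairwise (fun a b => (key b < key a)%O) t ->
  sort (fun a b => (key b <= key a)%O) s = t.
Proof.
move=> st t_gt; have geq_trans : transitive (fun a b => (key b <= key a)%O).
  by move=> a b c /[swap]; exact: le_trans.
have <- : sort (fun a b => (key b <= key a)%O) t = sort (fun a b => (key b <= key a)%O) s.
  apply/perm_sort_inP; last by rewrite perm_sym.
  - by move=> a b _ _; exact: le_total.
  - by move=> a b c _ _ _; exact: geq_trans.
  - move=> a b a_t b_t; apply: contraTeq => /(pairwise_mem_neq t_gt a_t b_t).
    by case/orP=> /lt_geF ->; rewrite ?andbF.
apply/sorted_sort/pairwise_sorted => //.
by apply: sub_pairwise t_gt => a b /ltW.
Qed.

Lemma sort_uniq_sorted_ltn (T : eqType) (c : T -> nat) s :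
  uniq (map c s) -> sorted ltn (map c (sort (fun a b => (c a <= c b)%N) s)).
Proof.
move=> c_uniq; have sort_perm : perm_eq (sort (fun a b => (c a <= c b)%N) s) s.
  by rewrite perm_sort.
rewrite ltn_sorted_uniq_leq (perm_uniq (perm_map c sort_perm)) c_uniq sorted_map.
by apply: sort_sorted => a b; exact: leq_total.
Qed.

Section Simulation.
Variables (A B : eqType) (r : A -> B -> Prop).

Definition matched (L1 : seq A) (L2 : seq B) : Prop :=
  (forall x, x \in L1 -> exists2 y, y \in L2 & r x y) /\
  (forall y, y \in L2 -> exists2 x, x \in L1 & r x y).

Lemma matched_pair a b c d : r a c -> r b d -> matched [:: a; b] [:: c; d].
Proof.
move=> ac bd; split=> ?; rewrite !inE => /orP[] /eqP->.
- by exists c; rewrite ?mem_head.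
- by exists d; rewrite ?inE ?eqxx ?orbT.
- by exists a; rewrite ?mem_head.
- by exists b; rewrite ?inE ?eqxx ?orbT.
Qed.

Lemma matched_pairC a b c d : r a d -> r b c -> matched [:: a; b] [:: c; d].
Proof.
move=> ad bc; split=> ?; rewrite !inE => /orP[] /eqP->.
- by exists d; rewrite ?inE ?eqxx ?orbT.
- by exists c; rewrite ?mem_head.
- by exists b; rewrite ?inE ?eqxx ?orbT.
- by exists a; rewrite ?mem_head.
Qed.

Variables (f : A -> seq A) (g : B -> seq B).
Hypothesis matched_children : forall x y, r x y -> matched (f x) (g y).

Lemma matched_flatten_map L1 L2 :
  matched L1 L2 -> matched (flatten (map f L1)) (flatten (map g L2)).
Proof.
move=> [L12 L21]; split.
- move=> x' /flatten_mapP[x x_L1 x'_fx]; have [y y_L2 xy] := L12 x x_L1.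
  have [y' y'_gy x'y'] := (matched_children xy).1 x' x'_fx.
  by exists y' => //; apply/flatten_mapP; exists y.
- move=> y' /flatten_mapP[y y_L2 y'_gy]; have [x x_L1 xy] := L21 y y_L2.
  have [x' x'_fx x'y'] := (matched_children xy).2 y' y'_gy.
  by exists x' => //; apply/flatten_mapP; exists x.
Qed.

Lemma matched_iter k x y : r x y ->
  matched (iter k (fun L => flatten (map f L)) [:: x])
          (iter k (fun L => flatten (map g L)) [:: y]).
Proof.
move=> xy; elim: k => [|k IHk]; last exact: matched_flatten_map.
by split=> ?; rewrite inE => /eqP->; [exists y | exists x]; rewrite ?mem_head.
Qed.

End Simulation.

Ltac perm_by_count := apply/permP => ?; rewrite -?cats1 !count_cat /= ?count_cat /=; lia.

Section Correspondence.
Variables (R : realType) (n N : nat).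
Hypothesis N_gt0 : (0 < N)%N.
Notation point := 'rV[R]_n.
Notation vertex := (point * int)%type.
Notation sort_gen := (sort (fun a b : vertex => b.2 <= a.2)).

Lemma gen_bisect_level_change (s : gsimplex R n) W y z :
  sort_gen s = W ++ [:: y; z] -> level N y.2 != level N z.2 ->
  let m := (midpoint y.1 z.1, y.2 + N%:Z) in
  gen_bisect N s = (W ++ [:: m; z], W ++ [:: y; m]).
Proof.
move=> sorted_s yz m.
have nth_y : nth (0, 0) (W ++ [:: y; z]) (size W) = y by rewrite nth_cat_size.
have nth_z : nth (0, 0) (W ++ [:: y; z]) (size W).+1 = z.
  by rewrite -cat_rcons -(size_rcons W y) nth_cat_size.
rewrite /gen_bisect sorted_s size_cat addn2 /= nth_y nth_z yz /= nth_y.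
congr pair; first exact: set_nth_cat_size.
by rewrite -cat_rcons -(size_rcons W y) (set_nth_cat_size _ (rcons W y) z [::]) cat_rcons.
Qed.

Lemma gen_bisect_same_level (s : gsimplex R n) W v V z :
  sort_gen s = W ++ v :: rcons V z ->
  all (fun x => level N x.2 != level N z.2) W ->
  all (fun x => level N x.2 == level N z.2) (v :: V) ->
  let m := (midpoint v.1 z.1, z.2 + 2 * N%:Z + 1 - vtype N v.2) in
  gen_bisect N s = (W ++ m :: rcons V z, W ++ v :: rcons V m).
Proof.
move=> sorted_s W_lev vV_lev m; set t := W ++ v :: rcons V z.
have size_t : (size t).-1 = size (W ++ v :: V) by rewrite /t !size_cat /= size_rcons addnS.
have t_rcons : t = rcons (W ++ v :: V) z by rewrite /t rcons_cat.
have nth_z : nth (0, 0) t (size (W ++ v :: V)) = z by rewrite t_rcons nth_rcons ltnn eqxx.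
have nth_pen : nth (0, 0) t (size (W ++ v :: V)).-1 = last v V.
  rewrite t_rcons nth_rcons size_cat /= addnS ltnSn nth_cat ltnNge leq_addr /=.
  by rewrite addKn (nth_last _ (v :: V)).
have last_lev : level N (last v V).2 == level N z.2.
  by move/allP: vV_lev; apply; rewrite mem_last.
have find_v : find (fun x => level N x.2 == level N z.2) t = size W.
  have W_nlev : has (fun x => level N x.2 == level N z.2) W = false.
    by apply/negbTE; rewrite -all_predC.
  by move: vV_lev => /andP[v_lev _]; rewrite /t find_cat W_nlev /= v_lev addn0.
rewrite /gen_bisect sorted_s -/t size_t nth_z nth_pen last_lev /= find_v nth_cat_size.
congr pair; first exact: set_nth_cat_size.
by rewrite t_rcons -cats1 (set_nth_cat_size _ (W ++ v :: V) z [::]) cats1 rcons_cat.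
Qed.

Lemma maub_childrenE (u0 x : point) U V :
  let p := midpoint u0 x in
  let gam := if (2 <= (size U).+1)%N then size U else n in
  maub_children (u0 :: rcons U x ++ V, (size U).+1) =
  [:: (u0 :: U ++ p :: V, gam); (rcons U x ++ p :: V, gam)].
Proof.
rewrite /maub_children /= [rcons U x ++ V]cat_rcons nth_cat_size set_nth_cat_size.
by rewrite -[U ++ x :: V]cat_rcons take_size_cat ?drop_size_cat ?size_rcons.
Qed.

Lemma midpointC (a b : point) : midpoint a b = midpoint b a.
Proof. by rewrite /midpoint addrC. Qed.

Definition maubach_inv (l : int) (x0 : vertex) (X1 : seq vertex) (xg : vertex)
    (X2 : seq vertex) : bool :=
  [&& all (fun x => at_level N l x.2) (rcons X1 xg),
      all (fun x => at_level N (l + 1) x.2) X2,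
      pairwise >%R (map snd (rcons X1 xg)),
      pairwise >%R (xg.2 + bisect_shift N l x0.2 :: map snd X2) &
      all (fun x => below_or_newer N l x0.2 x.2) (rcons X1 xg)].

Definition corresponds (s : gsimplex R n) (y : tsimplex R n) : Prop :=
  exists l x0 X1 xg X2, [/\ perm_eq s (x0 :: rcons X1 xg ++ X2),
    y = (map fst (x0 :: rcons X1 xg ++ X2), (size X1).+1),
    ((size X1).+1 + size X2)%N = n & maubach_inv l x0 X1 xg X2].

Lemma corresponds_perm s s' y : perm_eq s s' -> corresponds s' y -> corresponds s y.
Proof.
move=> ss' [l [x0 [X1 [xg [X2 [s'_perm y_eq size_n inv]]]]]].
by exists l, x0, X1, xg, X2; split=> //; apply: perm_trans s'_perm.
Qed.

Lemma corresponds_perm_fst s y : corresponds s y -> perm_eq (map fst s) y.1.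
Proof. by move=> [l [x0 [X1 [xg [X2 [s_perm -> _ _]]]]]]; apply: perm_map. Qed.

Lemma maubach_inv_new_vertex l x0 X1 xg X2 p :
  maubach_inv l x0 X1 xg X2 ->
  all (fun x => at_level N (l + 1) x.2) ((p, xg.2 + bisect_shift N l x0.2) :: X2).
Proof.
case/and5P=> lev_X1 lev_X2 _ _ newer_X1 /=; rewrite lev_X2 andbT.
have xg_X1 : xg \in rcons X1 xg by rewrite mem_rcons mem_head.
exact: at_level_add_shift (allP lev_X1 _ xg_X1) (allP newer_X1 _ xg_X1).
Qed.

Lemma corresponds_next_level l x0 m X2 :
  x0.2 <= N%:Z * l -> all (fun x => at_level N (l + 1) x.2) (m :: X2) ->
  pairwise >%R (map snd (m :: X2)) -> (size X2).+1 = n ->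
  corresponds (x0 :: m :: X2) (x0.1 :: m.1 :: map fst X2, n).
Proof.
move=> x0_le lev_mX2 gt_mX2 size_n.
exists (l + 1), x0, (belast m X2), (last m X2), [::]; rewrite -lastI cats0.
have newer : all (fun x => below_or_newer N (l + 1) x0.2 x.2) (m :: X2).
  by apply/allP => x _; rewrite /below_or_newer addrK x0_le.
by rewrite size_belast addn0 size_n /maubach_inv -lastI lev_mX2 gt_mX2 newer.
Qed.

Lemma corresponds_child1 l x0 X1 xg X2 p :
  maubach_inv l x0 X1 xg X2 -> ((size X1).+1 + size X2)%N = n ->
  let m := (p, xg.2 + bisect_shift N l x0.2) in
  corresponds (x0 :: X1 ++ m :: X2)
    (x0.1 :: map fst X1 ++ p :: map fst X2, if (2 <= (size X1).+1)%N then size X1 else n).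
Proof.
move=> inv size_n m; have lev_mX2 := maubach_inv_new_vertex p inv.
case/and5P: inv; case/lastP: X1 size_n => [|X1' x'] size_n lev_X1 _ gt_X1 gt_mX2 newer_X1.
  apply: corresponds_next_level lev_mX2 gt_mX2 _ => //.
  exact: below_or_newer_le (allP newer_X1 xg (mem_head _ _)).
move: lev_X1; rewrite all_rcons => /andP[_ lev_X1].
move: newer_X1; rewrite all_rcons => /andP[_ newer_X1].
move: gt_X1; rewrite map_rcons pairwise_rcons => /andP[/allP gt_xg gt_X1].
exists l, x0, X1', x', (m :: X2); split => //.
- by rewrite /= map_cat map_rcons size_rcons.
- by move: size_n; rewrite size_rcons /=; lia.
- apply/and5P; split => //; apply: pairwise_gt_cons2 gt_mX2.
  by rewrite ltrD2r; apply: gt_xg; rewrite map_rcons mem_rcons mem_head.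
Qed.

Lemma corresponds_child2 l x0 X1 xg X2 p :
  maubach_inv l x0 X1 xg X2 -> ((size X1).+1 + size X2)%N = n ->
  let m := (p, xg.2 + bisect_shift N l x0.2) in
  corresponds (rcons X1 xg ++ m :: X2)
    (rcons (map fst X1) xg.1 ++ p :: map fst X2, if (2 <= (size X1).+1)%N then size X1 else n).
Proof.
move=> inv size_n m; have lev_mX2 := maubach_inv_new_vertex p inv.
case/and5P: inv; case: X1 size_n => [|x1 X1'] size_n lev_X1 _ gt_X1 gt_mX2 newer_X1.
  apply: corresponds_next_level lev_mX2 gt_mX2 _ => //.
  by move: lev_X1 => /= /andP[/andP[_ ->]].
move: lev_X1 gt_X1 newer_X1 => /= /andP[lev_x1 lev_X1] /andP[/allP gt_x1 gt_X1].
move=> /andP[newer_x1 _].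
exists l, x1, X1', xg, (m :: X2); split => //.
- by rewrite /= map_cat map_rcons.
- by move: size_n => /=; lia.
- apply/and5P; split => //.
    by apply: pairwise_gt_cons2 gt_mX2; rewrite ltrD2l bisect_shift_lt.
  apply/allP => x x_X1'; rewrite /below_or_newer lev_x1 /=.
  by apply/orP; right; apply: gt_x1; exact: map_f.
Qed.

Lemma gen_children_below l x0 X1 xg X2 s :
  perm_eq s (x0 :: rcons X1 xg ++ X2) -> maubach_inv l x0 X1 xg X2 ->
  x0.2 <= N%:Z * (l - 1) ->
  let m := (midpoint x0.1 xg.1, xg.2 + bisect_shift N l x0.2) in
  gen_children N s = [:: (X2 ++ X1) ++ [:: m; x0]; (X2 ++ X1) ++ [:: xg; m]].
Proof.
move=> s_perm /and5P[lev_X1 lev_X2 gt_X1 /andP[_ gt_X2] newer_X1] x0_below m.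
have xg_X1 : xg \in rcons X1 xg by rewrite mem_rcons mem_head.
have xg_lev : at_level N l xg.2 := allP lev_X1 xg xg_X1.
have sorted_s : sort_gen s = (X2 ++ X1) ++ [:: xg; x0].
  apply: sort_key_perm_eq; first by apply: perm_trans s_perm _; perm_by_count.
  suff : pairwise >%R (map snd ((X2 ++ X1) ++ [:: xg; x0])) by rewrite pairwise_map.
  have -> : map snd ((X2 ++ X1) ++ [:: xg; x0]) =
            map snd X2 ++ (map snd (rcons X1 xg) ++ [:: x0.2]).
    by rewrite -cats1 !map_cat -!catA.
  apply: (@pairwise_gt_cat_level N l) => //.
  - by rewrite all_map.
  - rewrite all_cat /= andbT all_map (below_or_newer_le (allP newer_X1 xg xg_X1)) andbT.
    by apply: sub_all lev_X1 => x /andP[].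
  - by apply: (@pairwise_gt_cat_level N (l - 1)); rewrite ?subrK ?all_map //= andbT.
have level_change : level N xg.2 != level N x0.2.
  rewrite (levelE N_gt0 xg_lev); apply/eqP => l_x0.
  by move: (at_level_level x0.2 N_gt0); rewrite -l_x0 /at_level; lia.
rewrite /gen_children (gen_bisect_level_change sorted_s level_change) /=.
by rewrite midpointC /m /bisect_shift x0_below.
Qed.

Lemma gen_children_newer l x0 X1 xg X2 s :
  perm_eq s (x0 :: rcons X1 xg ++ X2) -> maubach_inv l x0 X1 xg X2 ->
  ~~ (x0.2 <= N%:Z * (l - 1)) ->
  let m := (midpoint x0.1 xg.1, xg.2 + bisect_shift N l x0.2) in
  gen_children N s = [:: X2 ++ m :: rcons X1 xg; X2 ++ x0 :: rcons X1 m].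
Proof.
move=> s_perm /and5P[lev_X1 lev_X2 gt_X1 /andP[_ gt_X2] newer_X1] x0_above m.
have xg_X1 : xg \in rcons X1 xg by rewrite mem_rcons mem_head.
have x0_lev : at_level N l x0.2.
  by move: (allP newer_X1 xg xg_X1); rewrite /below_or_newer (negbTE x0_above) => /andP[].
have lt_x0 : all (fun x => x.2 < x0.2) (rcons X1 xg).
  apply: sub_all newer_X1 => x; rewrite /below_or_newer (negbTE x0_above).
  by case/andP.
have sorted_s : sort_gen s = X2 ++ x0 :: rcons X1 xg.
  apply: sort_key_perm_eq; first by apply: perm_trans s_perm _; perm_by_count.
  suff : pairwise >%R (map snd (X2 ++ x0 :: rcons X1 xg)) by rewrite pairwise_map.
  rewrite map_cat; apply: (@pairwise_gt_cat_level N l) => //.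
  - by rewrite all_map.
  - rewrite /= all_map; apply/andP; split; first by case/andP: x0_lev.
    by apply: sub_all lev_X1 => x /andP[].
  - by rewrite /= all_map lt_x0.
rewrite /gen_children (gen_bisect_same_level (W := X2) (v := x0) (V := X1) sorted_s) /=.
- by rewrite (vtypeE N_gt0 x0_lev) /m /bisect_shift (negbTE x0_above) -!addrA.
- apply/allP => x /(allP lev_X2) x_lev; rewrite (levelE N_gt0 x_lev).
  rewrite (levelE N_gt0 (allP lev_X1 xg xg_X1)); lia.
- rewrite /= (levelE N_gt0 x0_lev) (levelE N_gt0 (allP lev_X1 xg xg_X1)) eqxx /=.
  apply/allP => x x_X1; rewrite (levelE N_gt0 (l := l)) //.
  by apply: (allP lev_X1); rewrite mem_rcons inE x_X1 orbT.
Qed.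

Lemma corresponds_children s y :
  corresponds s y -> matched corresponds (gen_children N s) (maub_children y).
Proof.
move=> [l [x0 [X1 [xg [X2 [s_perm -> size_n inv]]]]]].
have -> : map fst (x0 :: rcons X1 xg ++ X2) = x0.1 :: rcons (map fst X1) xg.1 ++ map fst X2.
  by rewrite /= map_cat map_rcons.
rewrite -(size_map fst X1) maub_childrenE size_map.
have child1 := corresponds_child1 (midpoint x0.1 xg.1) inv size_n.
have child2 := corresponds_child2 (midpoint x0.1 xg.1) inv size_n.
have [x0_below | x0_above] := boolP (x0.2 <= N%:Z * (l - 1)).
- rewrite (gen_children_below s_perm inv x0_below).
  by apply: matched_pair; [apply: corresponds_perm child1 | apply: corresponds_perm child2];
    perm_by_count.
- rewrite (gen_children_newer s_perm inv x0_above).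
  by apply: matched_pairC; [apply: corresponds_perm child2 | apply: corresponds_perm child1];
    perm_by_count.
Qed.

Lemma corresponds_gen_init (c : point -> nat) (T : seq point) v0 W :
  (0 < n)%N -> perm_eq T (v0 :: W) -> size W = n -> sorted ltn (map c W) ->
  all (fun v => c v < N)%N W -> (c v0 == N) || all (fun v => c v0 < c v)%N W ->
  corresponds (gen_init c T) (v0 :: W, n).
Proof.
move=> n_gt0; set f := fun v : point => (v, - (c v)%:Z).
case/lastP: W => [|W w] T_perm size_W sorted_W W_lt_N v0_cond.
  by rewrite -size_W in n_gt0.
have fstK V : map fst (map f V) = V by elim: V => //= v V ->.
exists 0, (f v0), (map f W), (f w), [::]; rewrite cats0 -map_rcons; split.
- by rewrite /gen_init -/f -map_cons perm_map.
- by rewrite -map_cons fstK size_map -(size_rcons W w) size_W.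
- by rewrite size_map addn0 -(size_rcons W w) size_W.
rewrite /maubach_inv -map_rcons /= !all_map.
apply/and3P; split.
- by apply: sub_all W_lt_N => v /= v_lt; rewrite /at_level; lia.
- move: sorted_W; rewrite sorted_pairwise; last exact: ltn_trans.
  by rewrite !pairwise_map; apply: sub_pairwise => a b /=; rewrite ltrN2 ltz_nat.
- case/orP: v0_cond => [/eqP v0_N | v0_lt].
    by apply/allP => v _; rewrite /below_or_newer /= v0_N; apply/orP; left; lia.
  have v0_lt_N : (c v0 < N)%N.
    by apply: ltn_trans (allP v0_lt w _) (allP W_lt_N w _); rewrite mem_rcons mem_head.
  apply: sub_all v0_lt => v /= v0_v.
  by rewrite /below_or_newer /at_level; apply/orP; right; lia.
Qed.

Lemma corresponds_maub_init (c : point -> nat) (T : seq point) :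
  (0 < n)%N -> size T = n.+1 -> {in T, forall v, c v <= N}%N -> uniq (map c T) ->
  corresponds (gen_init c T) (maub_init N c T).
Proof.
move=> n_gt0 size_T c_le c_uniq; rewrite /maub_init.
set u := sort _ T.
have T_perm : perm_eq T u by rewrite perm_sym perm_sort.
have u_lt : sorted ltn (map c u) by apply: sort_uniq_sorted_ltn.
have u_le : {in u, forall v, c v <= N}%N by move=> v; rewrite -(perm_mem T_perm); apply: c_le.
have size_u : size u = n.+1 by rewrite -(perm_size T_perm).
clearbody u; case/lastP: u T_perm u_lt u_le size_u => [//|W z] T_perm u_lt u_le size_u.
rewrite last_rcons.
have z_le : (c z <= N)%N by apply: u_le; rewrite mem_rcons mem_head.
have lt_z : all (fun v => c v < c z)%N W.
  move: u_lt; rewrite map_rcons sorted_pairwise; last exact: ltn_trans.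
  by rewrite pairwise_rcons all_map => /andP[].
case: eqP => [z_N | /eqP z_ne].
  rewrite rotr1_rcons; apply: corresponds_gen_init => //.
  - by apply: perm_trans T_perm _; rewrite perm_rcons.
  - by move: size_u; rewrite size_rcons => -[].
  - by apply: (subseq_sorted ltn_trans (subseq_rcons _ (c z))); rewrite -map_rcons.
  - by rewrite -z_N.
  - by rewrite z_N eqxx.
case: W T_perm u_lt u_le size_u lt_z => [|v0 W] T_perm u_lt u_le size_u lt_z.
  by case: size_u => n0; rewrite -n0 in n_gt0.
apply: corresponds_gen_init => //.
- by move: size_u; rewrite /= size_rcons => -[].
- by move: u_lt => /= /path_sorted.
- apply/allP => v; rewrite mem_rcons inE => /predU1P[-> | v_W].
    by rewrite ltn_neqAle z_ne z_le.
  by apply: leq_trans (allP lt_z v _) _; rewrite ?inE ?v_W ?orbT.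
- apply/orP; right; move: u_lt => /=; rewrite path_sortedE; last exact: ltn_trans.
  by rewrite all_map => /andP[].
Qed.

End Correspondence.

Lemma same_simplices_matched (R : realType) n (r : gsimplex R n -> tsimplex R n -> Prop)
    (L1 : seq (gsimplex R n)) (L2 : seq (tsimplex R n)) :
  (forall x y, r x y -> perm_eq (map fst x) y.1) -> matched r L1 L2 ->
  same_simplices (map (map fst) L1) (map fst L2).
Proof.
move=> r_perm [L12 L21]; apply/andP; split; apply/allP.
- move=> _ /mapP[x x_L1 ->]; have [y y_L2 xy] := L12 x x_L1.
  by apply/hasP; exists y.1; [exact: map_f | exact: r_perm].
- move=> _ /mapP[y y_L2 ->]; have [x x_L1 xy] := L21 y y_L2.
  by apply/hasP; exists (map fst x); [exact: map_f | rewrite perm_sym; exact: r_perm].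
Qed.

Unset Implicit Arguments.

Theorem theorem4p2 (R : realType) (n N : nat) (T0 : seq (seq 'rV[R]_n))
    (c : 'rV[R]_n -> nat) :
  (2 <= n)%N -> (n <= N)%N -> colored_triangulation N T0 c ->
  forall T, T \in T0 -> forall k : nat,
    same_simplices
      (map (map fst) (gen_desc N k (gen_init c T)))
      (map fst (maub_desc k (maub_init N c T))).
Proof.
move=> n_ge2 n_le_N [simplices [_ [_ [_ [colors_le colors_uniq]]]]] T T_T0 k.
have n_gt0 : (0 < n)%N by apply: leq_trans n_ge2.
have N_gt0 : (0 < N)%N by apply: leq_trans n_le_N.
have [size_T _] := simplices T T_T0.
have init := corresponds_maub_init N_gt0 n_gt0 size_T (colors_le T T_T0) (colors_uniq T T_T0).
apply: same_simplices_matched (@corresponds_perm_fst R n N) _.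
exact: matched_iter (corresponds_children N_gt0) k _ _ init.
Qed.
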